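(* Let $A$ be a non-empty set of parameters and $\mathcal{BSS}(U)_A$ the collection of all bipolar soft sets over $U$ with parameter set $A$. Then $(\mathcal{BSS}(U)_A,\cap_{\mathcal R},\cup_{\mathcal R},{}^c,(\mathfrak U,\Phi,A),(\Phi,\mathfrak U,A))$ is a De Morgan algebra.
   Context: Let $U$ be a set and $E$ a set of parameters; each parameter $e$ has a formal negation $\lnot e$, and $\lnot A=\{\lnot e:e\in A\}$. A bipolar soft set over $U$ is a triple $(F,G,A)$ with $A\subseteq E$ non-empty, $F:A\to\mathcal P(U)$, $G:\lnot A\to\mathcal P(U)$, $F(e)\cap G(\lnot e)=\emptyset$ for all $e\in A$. For $(F,G,A),(F_1,G_1,A)\in\mathcal{BSS}(U)_A$: $(F,G,A)\cap_{\mathcal R}(F_1,G_1,A)=(H,I,A)$ with $H(e)=F(e)\cap F_1(e)$, $I(\lnot e)=G(\lnot e)\cup G_1(\lnot e)$; $(F,G,A)\cup_{\mathcal R}(F_1,G_1,A)=(H,I,A)$ with $H(e)=F(e)\cup F_1(e)$, $I(\lnot e)=G(\lnot e)\cap G_1(\lnot e)$. The complement is $(F,G,A)^c=(F^c,G^c,A)$ with $F^c(e)=G(\lnot e)$, $G^c(\lnot e)=F(e)$. $(\mathfrak U,\Phi,A)$ has $\mathfrak U(e)=U$, $\Phi(\lnot e)=\emptyset$; $(\Phi,\mathfrak U,A)$ has $\Phi(e)=\emptyset$, $\mathfrak U(\lnot e)=U$, for all $e\in A$. A De Morgan algebra $(L,\wedge,\vee,\neg,1,0)$ is a bounded distributive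 lattice (meet $\wedge$, join $\vee$, top $1$, bottom $0$) with a unary operation $\neg$ satisfying $\neg\neg x=x$ and $\neg(x\wedge y)=\neg x\vee\neg y$ for all $x,y$. *)

Set Implicit Arguments.

(* The formal negation "not e" is represented by e itself, so a map
   G : not A -> P(U) is a map indexed by {e | A e}, G e standing for G(not e). *)
Definition param (E : Type) (A : E -> Prop) := { e : E | A e }.

Record BSS (U E : Type) (A : E -> Prop) := mkBSS {
  bF : param A -> U -> Prop;
  bG : param A -> U -> Prop;
  bdisj : forall e x, bF e x -> bG e x -> False
}.
Arguments mkBSS {U E A}.
Arguments bF {U E A}.
Arguments bG {U E A}.

Section Ops.
Variables (U E : Type) (A : E -> Prop).

Lemma bssR_inter_disj (s t : BSS U A) :
  forall e x, (bF s e x /\ bF t e x) -> (bG s e x \/ bG t e x) -> False.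
Proof.
  intros e x [H1 H2] [H3|H3]; [exact (bdisj s e x H1 H3) | exact (bdisj t e x H2 H3)].
Qed.

Lemma bssR_union_disj (s t : BSS U A) :
  forall e x, (bF s e x \/ bF t e x) -> (bG s e x /\ bG t e x) -> False.
Proof.
  intros e x [H1|H1] [H2 H3]; [exact (bdisj s e x H1 H2) | exact (bdisj t e x H1 H3)].
Qed.

Definition bss_interR (s t : BSS U A) : BSS U A :=
  mkBSS (fun e x => bF s e x /\ bF t e x) (fun e x => bG s e x \/ bG t e x)
        (@bssR_inter_disj s t).

Definition bss_unionR (s t : BSS U A) : BSS U A :=
  mkBSS (fun e x => bF s e x \/ bF t e x) (fun e x => bG s e x /\ bG t e x)
        (@bssR_union_disj s t).

Lemma bss_compl_disj (s : BSS U A) : forall e x, bG s e x -> bF s e x -> False.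
Proof. intros e x H1 H2; exact (bdisj s e x H2 H1). Qed.

Definition bss_compl (s : BSS U A) : BSS U A :=
  mkBSS (bG s) (bF s) (@bss_compl_disj s).

Lemma bss_top_disj : forall (e : param A) (x : U), True -> False -> False.
Proof. intros e x _ H; exact H. Qed.
Lemma bss_bot_disj : forall (e : param A) (x : U), False -> True -> False.
Proof. intros e x H _; exact H. Qed.

Definition bss_top : BSS U A :=
  mkBSS (fun _ _ => True) (fun _ _ => False) bss_top_disj.
Definition bss_bot : BSS U A :=
  mkBSS (fun _ _ => False) (fun _ _ => True) bss_bot_disj.
End Ops.

Definition DeMorgan_algebra (L : Type) (meet join : L -> L -> L) (neg : L -> L)
    (top bot : L) : Prop :=
  (forall x y, meet x y = meet y x) /\
  (forall x y, join x y = join y x) /\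
  (forall x y z, meet x (meet y z) = meet (meet x y) z) /\
  (forall x y z, join x (join y z) = join (join x y) z) /\
  (forall x y, meet x (join x y) = x) /\
  (forall x y, join x (meet x y) = x) /\
  (forall x y z, meet x (join y z) = join (meet x y) (meet x z)) /\
  (forall x, meet x top = x) /\
  (forall x, join x bot = x) /\
  (forall x, neg (neg x) = x) /\
  (forall x y, neg (meet x y) = join (neg x) (neg y)).

(* Bipolar soft sets are determined by their two components pointwise (the
   disjointness proofs are irrelevant), and the operations act on the
   components by [/\], [\/] and swapping; so each De Morgan algebra law
   reduces to a propositional tautology about the memberships. *)

From Stdlib Require Import FunctionalExtensionality PropExtensionality ProofIrrelevance.

Lemma bss_ext (U E : Type) (A : E -> Prop) (s t : BSS U A) :
  (forall e x, bF s e x <-> bF t e x) -> (forall e x, bG s e x <-> bG t e x) ->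
  s = t.
Proof.
  destruct s as [F G dFG], t as [F' G' dFG']; simpl; intros HF HG.
  assert (F = F') as <-.
  { extensionality e; extensionality x; apply propositional_extensionality; auto. }
  assert (G = G') as <-.
  { extensionality e; extensionality x; apply propositional_extensionality; auto. }
  f_equal; apply proof_irrelevance.
Qed.

Theorem mainTheorem9 (U E : Type) (A : E -> Prop) (hA : exists e, A e) :
  DeMorgan_algebra (@bss_interR U E A) (@bss_unionR U E A) (@bss_compl U E A)
    (bss_top U A) (bss_bot U A).
Proof.
  repeat split; intros; apply bss_ext; simpl; tauto.
Qed.
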